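(* Let $0<a<1$ and let $(\mathbf X_j)_{j\ge0}$ be the persistent random walk on $\mathbb Z$ with persistence parameter $a$ started at $\mathbf X_0=0$, with law $P_a$. Let $\mathbf L:=\inf\{j\ge1:\mathbf X_j=0\}$, and let $\mathbf R$ and $\mathbf U$ be the numbers of runs and of long runs of the excursion path $\mathbf X_0,\dots,\mathbf X_{\mathbf L}$. Then for all integers $n\ge2$ and $k,\ell\ge0$, $$(1-a)P_a(\mathbf L=2n,\mathbf R=2k,\mathbf U=\ell)=a\,P_{1-a}(\mathbf L=2n,\mathbf L-\mathbf R=2k,\mathbf U=\ell).$$ Moreover, for $a=\frac12$ and all real $r,s,t$, $$E\{e^{ir\mathbf R}e^{is\mathbf U}e^{it\mathbf L}\}-E\{e^{ir(\mathbf L-\mathbf R)}e^{is\mathbf U}e^{it\mathbf L}\}=\tfrac12e^{2it}(e^{2ir}-1).$$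
   Context: The persistent random walk with parameter $a$: increments $\varepsilon_j=\mathbf X_j-\mathbf X_{j-1}\in\{\pm1\}$, $P(\varepsilon_1=1)=P(\varepsilon_1=-1)=\frac12$, and for $j\ge1$ the next increment equals the previous one with probability $a$ and is reversed with probability $1-a$. For a nearest-neighbour path, a run is a maximal block of consecutive steps that are all $+1$ or all $-1$; its length is its number of steps; a long run is a run of length at least $2$. *)

From Stdlib Require Import Reals ZArith Arith List Bool.
From Coquelicot Require Import Coquelicot.
Import ListNotations.
Open Scope R_scope.

(** Increment sequences: [true] = +1, [false] = -1.
    [bools m] enumerates all {+1,-1}-sequences of length m (each once). *)
Fixpoint bools (m : nat) : list (list bool) :=
  match m with
  | O => [[]]
  | S m' => map (cons true) (bools m') ++ map (cons false) (bools m')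
  end.

(** Law of the persistent random walk with parameter a on the first
    (length e) increments:  P_a(eps_1..eps_m = e) =
    1/2 * prod_{j>=2} (a if eps_j = eps_{j-1} else 1-a). *)
Fixpoint wt_aux (a : R) (prev : bool) (e : list bool) : R :=
  match e with
  | [] => 1
  | b :: r => (if Bool.eqb b prev then a else 1 - a) * wt_aux a b r
  end.

Definition weight (a : R) (e : list bool) : R :=
  match e with
  | [] => 1
  | b :: r => / 2 * wt_aux a b r
  end.

(** P_a(A) for an event A determined by the first m increments. *)
Definition Pfin (a : R) (m : nat) (A : list bool -> bool) : R :=
  fold_right Rplus 0
    (map (fun e => if A e then weight a e else 0) (bools m)).

Fixpoint first_ret_aux (x : Z) (e : list bool) : bool :=
  match e with
  | [] => false
  | b :: r =>
      let y := (x + (if b then 1 else -1))%Z in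
      if Z.eqb y 0 then (match r with [] => true | _ => false end)
      else first_ret_aux y r
  end.

(** [excursion e]: L = inf{j>=1 : X_j = 0} equals length e (X_0 = 0). *)
Definition excursion (e : list bool) : bool := first_ret_aux 0 e.

Fixpoint rl_aux (cur : bool) (len : nat) (e : list bool) : list nat :=
  match e with
  | [] => [len]
  | b :: r => if Bool.eqb b cur then rl_aux cur (S len) r
              else len :: rl_aux b 1 r
  end.

Definition run_lengths (e : list bool) : list nat :=
  match e with
  | [] => []
  | b :: r => rl_aux b 1 r
  end.

Definition runs (e : list bool) : nat := length (run_lengths e).
Definition longruns (e : list bool) : nat :=
  length (filter (fun k => Nat.leb 2 k) (run_lengths e)).

Definition expi (x : R) : C := (cos x, sin x).

(** m-th term of E{ f(excursion) } = sum_m E{ f ; L = m }: the sum over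
    excursion paths of length m of P_a(path) * f(path). *)
Definition Eterm (a : R) (f : list bool -> C) (m : nat) : C :=
  fold_right Cplus (RtoC 0)
    (map (fun e => if excursion e then Cmult (RtoC (weight a e)) (f e)
                   else RtoC 0) (bools m)).

(* Under P_a a path with L >= 1 steps and R runs has probability
   (1/2) a^(L-R) (1-a)^(R-1), so (1-a) P_a(e) = a P_(1-a)(e') whenever e' has the
   same length as e and L - R runs. Both statements thus follow from an involution
   on the excursions of each length L <> 2 that exchanges R with L - R and
   preserves the number U of long runs; for a = 1/2 all paths of length L have the
   same weight, and the two characteristic functions differ only by the two
   excursions of length 2.

   Record, for every up-step and every down-step of an upward excursion, whether
   it ends its run. The two flag lists read false :: x ++ [true] and
   y ++ [false; true], where x and y have the same length and the same number of
   trues, and every prefix of x has at most as many trues as the prefix of y of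
   the same length: this is exactly the condition that the walk stays positive.
   Runs are the trues of the flag lists and long runs their ascents (false, true).
   The Lalanne-Kreweras map (x, y) |-> (negb y, negb x) preserves these
   conditions, turns R = ntrue x + ntrue y + 2 into L - R and fixes U. Downward excursions
   are handled by reflection. *)

From Stdlib Require Import Reals ZArith Arith List Bool Lia Lra Permutation.
From Coquelicot Require Import Coquelicot.
Import ListNotations.

Open Scope nat_scope.

Notation ntrue l := (count_occ bool_dec l true).

Fixpoint ascents (l : list bool) : nat :=
  match l with
  | [] => 0
  | b :: r => (if negb b && hd false r then 1 else 0) + ascents r
  end.

Lemma ntrue_cons (b : bool) (l : list bool) : ntrue (b :: l) = (if b then 1 else 0) + ntrue l.
Proof. destruct b; reflexivity. Qed.

Lemma ntrue_map_negb (l : list bool) : ntrue (map negb l) = length l - ntrue l.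
Proof.
  induction l as [|b l IH]; [reflexivity|].
  pose proof (count_occ_bound bool_dec true l).
  cbn [map length]. rewrite !ntrue_cons, IH. destruct b; cbn [negb]; lia.
Qed.

Lemma map_negb_involutive (l : list bool) : map negb (map negb l) = l.
Proof. rewrite map_map. erewrite map_ext; [apply map_id|]. apply negb_involutive. Qed.

Lemma ascents_app_false_true (l : list bool) : ascents (l ++ [false; true]) = S (ascents l).
Proof.
  induction l as [|b l IH]; [reflexivity|].
  cbn [app ascents]. rewrite IH. destruct l; simpl; lia.
Qed.

Lemma ascents_cons_app_true (b : bool) (l : list bool) :
  ascents (b :: l ++ [true]) + (if b then 1 else 0) = S (ascents (map negb (b :: l))).
Proof.
  revert b. induction l as [|c l IH]; intros b; [destruct b; reflexivity|].
  specialize (IH c). simpl in *. destruct b, c; simpl in *; lia.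
Qed.

Definition run_end (x : bool) (r : list bool) : bool :=
  match r with [] => true | y :: _ => xorb x y end.

Fixpoint run_ends (e : list bool) : list bool :=
  match e with [] => [] | x :: r => run_end x r :: run_ends r end.

Fixpoint run_flags (c : bool) (e : list bool) : list bool :=
  match e with
  | [] => []
  | x :: r => if Bool.eqb x c then run_end x r :: run_flags c r else run_flags c r
  end.

Lemma length_rl_aux (cur : bool) (len : nat) (r : list bool) :
  length (rl_aux cur len r) = ntrue (run_ends (cur :: r)).
Proof.
  revert cur len; induction r as [|y r IH]; intros cur len; [reflexivity|].
  cbn [rl_aux run_ends run_end]. rewrite ntrue_cons.
  destruct y, cur; cbn [Bool.eqb xorb length]; rewrite IH; reflexivity.
Qed.

Lemma length_filter_long_rl_aux (cur : bool) (len : nat) (r : list bool) : 1 <= len ->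
  length (filter (fun k => Nat.leb 2 k) (rl_aux cur len r))
  = ascents (run_ends (cur :: r)) + (if (2 <=? len) && run_end cur r then 1 else 0).
Proof.
  revert cur len; induction r as [|y r IH]; intros cur len Hlen.
  - destruct len as [|[|len]]; [lia|reflexivity|reflexivity].
  - change (rl_aux cur len (y :: r))
      with (if Bool.eqb y cur then rl_aux cur (S len) r else len :: rl_aux y 1 r).
    change (run_ends (cur :: y :: r)) with (xorb cur y :: run_ends (y :: r)).
    destruct (Bool.eqb y cur) eqn:Ey.
    + apply Bool.eqb_prop in Ey as ->. rewrite IH by lia.
      destruct len as [|[|len]]; [lia| |]; simpl; rewrite ?Bool.xorb_nilpotent; simpl; lia.
    + pose proof (IH y 1 (le_n 1)) as IHy. cbn [filter].
      destruct y, cur; try discriminate; destruct (2 <=? len); simpl in *; lia.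
Qed.

Lemma runs_run_ends (e : list bool) : runs e = ntrue (run_ends e).
Proof. destruct e as [|x r]; [reflexivity|]. apply length_rl_aux. Qed.

Lemma longruns_run_ends (e : list bool) : longruns e = ascents (run_ends e).
Proof.
  destruct e as [|x r]; [reflexivity|].
  unfold longruns, run_lengths. rewrite length_filter_long_rl_aux by lia. simpl. lia.
Qed.

Lemma length_run_flags (e : list bool) :
  length (run_flags true e) + length (run_flags false e) = length e.
Proof. induction e as [|[] r IH]; simpl; lia. Qed.

Lemma ntrue_run_ends (e : list bool) :
  ntrue (run_ends e) = ntrue (run_flags true e) + ntrue (run_flags false e).
Proof.
  induction e as [|[] r IH]; [reflexivity| |];
    cbn [run_ends run_flags Bool.eqb]; rewrite !ntrue_cons; lia.
Qed.

Lemma ascents_run_ends (e : list bool) :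
  ascents (run_ends e) = ascents (run_flags true e) + ascents (run_flags false e).
Proof.
  induction e as [|x [|y r] IH]; [reflexivity|destruct x; reflexivity|].
  revert IH. destruct x, y; simpl; lia.
Qed.

Lemma runs_run_flags (e : list bool) :
  runs e = ntrue (run_flags true e) + ntrue (run_flags false e).
Proof. rewrite runs_run_ends. apply ntrue_run_ends. Qed.

Lemma longruns_run_flags (e : list bool) :
  longruns e = ascents (run_flags true e) + ascents (run_flags false e).
Proof. rewrite longruns_run_ends. apply ascents_run_ends. Qed.

Lemma length_run_ends (e : list bool) : length (run_ends e) = length e.
Proof. induction e as [|x r IH]; simpl; congruence. Qed.

Lemma runs_le_length (e : list bool) : runs e <= length e.
Proof. rewrite runs_run_ends, <- (length_run_ends e). apply count_occ_bound. Qed.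

Lemma runs_cons_cons (x y : bool) (r : list bool) :
  runs (x :: y :: r) = (if Bool.eqb x y then 0 else 1) + runs (y :: r).
Proof. rewrite !runs_run_ends. cbn [run_ends run_end]. rewrite ntrue_cons. now destruct x, y. Qed.

Lemma run_flags_cons (c x : bool) (r : list bool) :
  run_flags c (x :: r) = if Bool.eqb x c then run_end x r :: run_flags c r else run_flags c r.
Proof. reflexivity. Qed.

Lemma last_run_flags (c : bool) (e : list bool) : last (run_flags c e) true = true.
Proof.
  induction e as [|x r IH]; [reflexivity|]. rewrite run_flags_cons.
  destruct (Bool.eqb x c) eqn:Ex; [|exact IH].
  apply Bool.eqb_prop in Ex as ->.
  destruct (run_flags c r) as [|f fl] eqn:Er; [|exact IH].
  destruct r as [|y r]; [reflexivity|].
  rewrite run_flags_cons in Er. destruct (Bool.eqb y c) eqn:Ey; [discriminate|].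
  destruct y, c; easy.
Qed.

Lemma ntrue_run_flags_balance (x : bool) (r : list bool) :
  ntrue (run_flags true (x :: r)) + (if x then 0 else 1)
  = ntrue (run_flags false (x :: r)) + (if last (x :: r) true then 1 else 0).
Proof.
  revert x; induction r as [|y r IH]; intros x; [destruct x; reflexivity|].
  specialize (IH y). change (last (x :: y :: r) true) with (last (y :: r) true).
  rewrite (run_flags_cons true x), (run_flags_cons false x).
  revert IH. destruct x, y; cbn [Bool.eqb run_end xorb]; rewrite !ntrue_cons; lia.
Qed.

(* Each step in direction [c] consumes the next [c]-flag, and the direction
   switches after a [true]; [k] is fuel. *)
Fixpoint rebuild (k : nat) (c : bool) (ups downs : list bool) : list bool :=
  match k with
  | O => []
  | S k =>
      if c then
        match ups with [] => [] | f :: ups => true :: rebuild k (negb f) ups downs end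
      else
        match downs with [] => [] | g :: downs => false :: rebuild k g ups downs end
  end.

Lemma rebuild_run_flags (x : bool) (r : list bool) (k : nat) : length (x :: r) <= k ->
  rebuild k x (run_flags true (x :: r)) (run_flags false (x :: r)) = x :: r.
Proof.
  revert x k; induction r as [|y r IH]; intros x [|k] Hk; try (simpl in Hk; lia).
  - destruct x, k; reflexivity.
  - rewrite (run_flags_cons true x (y :: r)), (run_flags_cons false x (y :: r)).
    destruct x; cbn [Bool.eqb rebuild run_end];
      rewrite ?xorb_true_l, ?negb_involutive, ?xorb_false_l, IH by (simpl in *; lia); reflexivity.
Qed.

(* Invariant of [rebuild]: the remaining flags describe complete runs that
   alternate, starting in direction [c]. *)
Definition flags_ok (c : bool) (ups downs : list bool) : Prop :=
  last ups true = true /\ last downs true = true /\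
  (if c then ntrue ups = ntrue downs else ntrue downs = S (ntrue ups)).

Lemma last_true_tail (b : bool) (l : list bool) : last (b :: l) true = true -> last l true = true.
Proof. destruct l; [reflexivity|exact (fun H => H)]. Qed.

Lemma nil_of_ntrue_0 (l : list bool) : last l true = true -> ntrue l = 0 -> l = [].
Proof.
  induction l as [|b l IH]; intros Hlast H0; [reflexivity|].
  rewrite ntrue_cons in H0. destruct b; [discriminate|].
  rewrite (IH (last_true_tail _ _ Hlast) H0) in Hlast. discriminate.
Qed.

Lemma flags_ok_up (f : bool) (ups downs : list bool) :
  flags_ok true (f :: ups) downs -> flags_ok (negb f) ups downs.
Proof.
  intros (Hu & Hd & Hn). rewrite ntrue_cons in Hn.
  split; [exact (last_true_tail _ _ Hu)|split; [exact Hd|destruct f; simpl; lia]].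
Qed.

Lemma flags_ok_down (g : bool) (ups downs : list bool) :
  flags_ok false ups (g :: downs) -> flags_ok g ups downs.
Proof.
  intros (Hu & Hd & Hn). rewrite ntrue_cons in Hn.
  split; [exact Hu|split; [exact (last_true_tail _ _ Hd)|destruct g; simpl; lia]].
Qed.

Lemma flags_ok_true_nil (downs : list bool) : flags_ok true [] downs -> downs = [].
Proof. intros (_ & Hd & Hn). apply nil_of_ntrue_0; [exact Hd|now rewrite <- Hn]. Qed.

Lemma flags_ok_false_nil (ups : list bool) : ~ flags_ok false ups [].
Proof. intros (_ & _ & Hn). discriminate. Qed.

Lemma rebuild_head (k : nat) (c y : bool) (ups downs w : list bool) :
  rebuild k c ups downs = y :: w -> y = c.
Proof.
  destruct k as [|k]; [discriminate|]. destruct c; cbn [rebuild].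
  - destruct ups; [discriminate|]. now intros [= <- _].
  - destruct downs; [discriminate|]. now intros [= <- _].
Qed.

Lemma length_rebuild (k : nat) (c : bool) (ups downs : list bool) :
  flags_ok c ups downs -> length ups + length downs <= k ->
  length (rebuild k c ups downs) = length ups + length downs.
Proof.
  revert c ups downs; induction k as [|k IH]; intros c ups downs Hok Hk.
  - destruct ups, downs; simpl in *; lia.
  - destruct c; cbn [rebuild].
    + destruct ups as [|f ups]; [now rewrite (flags_ok_true_nil _ Hok)|].
      simpl in *. rewrite IH by (auto using flags_ok_up; lia). reflexivity.
    + destruct downs as [|g downs]; [now destruct (flags_ok_false_nil _ Hok)|].
      simpl in *. rewrite IH by (auto using flags_ok_down; lia). lia.
Qed.

Lemma run_end_rebuild (x f : bool) (k : nat) (ups downs : list bool) :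
  flags_ok (xorb x f) ups downs -> length ups + length downs <= k ->
  (ups = [] -> downs = [] -> f = true) ->
  run_end x (rebuild k (xorb x f) ups downs) = f.
Proof.
  intros Hok Hk Hend. destruct (rebuild k (xorb x f) ups downs) as [|y w] eqn:Ew.
  - apply (f_equal (@length bool)) in Ew. rewrite length_rebuild in Ew by assumption.
    destruct ups, downs; try discriminate. now rewrite Hend.
  - rewrite (rebuild_head _ _ _ _ _ _ Ew). now destruct x, f.
Qed.

Lemma run_flags_rebuild (k : nat) (c : bool) (ups downs : list bool) :
  flags_ok c ups downs -> length ups + length downs <= k ->
  run_flags true (rebuild k c ups downs) = ups /\ run_flags false (rebuild k c ups downs) = downs.
Proof.
  revert c ups downs; induction k as [|k IH]; intros c ups downs Hok Hk.
  - destruct ups, downs; simpl in *; try lia. split; reflexivity.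
  - destruct c; cbn [rebuild].
    + destruct ups as [|f ups]; [rewrite (flags_ok_true_nil _ Hok); split; reflexivity|].
      pose proof (flags_ok_up _ _ _ Hok) as Hok'. simpl in Hk.
      destruct (IH _ _ _ Hok' ltac:(lia)) as [IHu IHd].
      rewrite !run_flags_cons, IHu, IHd. cbn [Bool.eqb]. split; [|reflexivity].
      f_equal. apply (run_end_rebuild true f); [exact Hok'|lia|].
      intros -> ->. exact (proj1 Hok).
    + destruct downs as [|g downs]; [now destruct (flags_ok_false_nil _ Hok)|].
      pose proof (flags_ok_down _ _ _ Hok) as Hok'. simpl in Hk.
      destruct (IH _ _ _ Hok' ltac:(lia)) as [IHu IHd].
      rewrite !run_flags_cons, IHu, IHd. cbn [Bool.eqb]. split; [reflexivity|].
      f_equal. apply (run_end_rebuild false g); [exact Hok'|lia|].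
      intros -> ->. exact (proj1 (proj2 Hok)).
Qed.

(** * First return to 0 as a ballot condition *)

(* The path coded by [ups] and [downs], started at height [h] in direction [c],
   stays positive up to its last down-step: the [t]-th down-step comes after
   more than [t - h] up-steps. *)
Definition ballot (h : nat) (c : bool) (ups downs : list bool) : Prop :=
  forall t, 1 <= t < length downs -> h <= t ->
    ntrue (firstn (t - h) ups) + (if c then 0 else 1) <= ntrue (firstn (t - 1) downs).

Lemma ballot_up (h : nat) (f : bool) (ups downs : list bool) :
  ballot h true (f :: ups) downs <-> ballot (S h) (negb f) ups downs.
Proof.
  split; intros H t Ht Hh.
  - specialize (H t Ht ltac:(lia)).
    replace (t - h) with (S (t - S h)) in H by lia.
    cbn [firstn] in H. rewrite ntrue_cons in H. destruct f; simpl in *; lia.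
  - destruct (Nat.eq_dec t h) as [->|Hne].
    + rewrite Nat.sub_diag. simpl. lia.
    + specialize (H t Ht ltac:(lia)).
      replace (t - h) with (S (t - S h)) by lia.
      cbn [firstn]. rewrite ntrue_cons. destruct f; simpl in *; lia.
Qed.

Lemma ballot_down (h : nat) (g : bool) (ups downs : list bool) : 2 <= h ->
  ballot h false ups (g :: downs) <-> ballot (h - 1) g ups downs.
Proof.
  intros Hh; split; intros H t Ht Hth; simpl in Ht.
  - specialize (H (S t) ltac:(simpl; lia) ltac:(lia)).
    replace (S t - h) with (t - (h - 1)) in H by lia.
    replace (S t - 1) with (S (t - 1)) in H by lia.
    cbn [firstn] in H. rewrite ntrue_cons in H. destruct g; simpl in *; lia.
  - specialize (H (t - 1) ltac:(lia) ltac:(lia)).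
    replace (t - h) with (t - 1 - (h - 1)) by lia.
    replace (t - 1) with (S (t - 1 - 1)) at 2 by lia.
    cbn [firstn]. rewrite ntrue_cons. destruct g; simpl in *; lia.
Qed.

Lemma first_ret_aux_up (h : nat) (r : list bool) :
  first_ret_aux (Z.of_nat h) (true :: r) = first_ret_aux (Z.of_nat (S h)) r.
Proof.
  cbn [first_ret_aux]. replace (Z.of_nat h + 1)%Z with (Z.of_nat (S h)) by lia.
  now replace (Z.of_nat (S h) =? 0)%Z with false by (symmetry; apply Z.eqb_neq; lia).
Qed.

Lemma first_ret_aux_down (h : nat) (r : list bool) : 2 <= h ->
  first_ret_aux (Z.of_nat h) (false :: r) = first_ret_aux (Z.of_nat (h - 1)) r.
Proof.
  intros Hh. cbn [first_ret_aux]. replace (Z.of_nat h + -1)%Z with (Z.of_nat (h - 1)) by lia.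
  now replace (Z.of_nat (h - 1) =? 0)%Z with false by (symmetry; apply Z.eqb_neq; lia).
Qed.

Lemma first_ret_aux_iff_ballot (e : list bool) (h : nat) : 1 <= h \/ hd false e = true ->
  first_ret_aux (Z.of_nat h) e = true <->
  e <> [] /\ h + length (run_flags true e) = length (run_flags false e) /\
  ballot h (hd false e) (run_flags true e) (run_flags false e).
Proof.
  revert h; induction e as [|x r IH]; intros h Hpre.
  { split; [discriminate|]. intros [H _]; congruence. }
  rewrite !run_flags_cons. destruct x; cbn [Bool.eqb hd].
  - rewrite first_ret_aux_up, (IH (S h)) by (left; lia).
    destruct r as [|y r].
    + simpl. split; [intros [H _]; congruence|intros [_ [H _]]; lia].
    + cbn [run_end hd length]. rewrite ballot_up.
      replace (negb (xorb true y)) with y by now destruct y.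
      split; intros (_ & H1 & H2); (split; [discriminate|split; [lia|exact H2]]).
  - destruct Hpre as [Hh|Hh]; [|discriminate].
    destruct (Nat.eq_dec h 1) as [->|Hne].
    + cbn. pose proof (length_run_flags r) as Hlen. split.
      * destruct r; [|discriminate]. intros _.
        split; [discriminate|split; [reflexivity|intros t Ht; simpl in Ht; lia]].
      * intros (_ & H1 & H2). destruct r as [|y r]; [reflexivity|exfalso].
        specialize (H2 1 ltac:(simpl in *; lia) (le_n 1)). simpl in H2. lia.
    + rewrite first_ret_aux_down, (IH (h - 1)) by lia.
      destruct r as [|y r].
      * simpl. split; [intros [H _]; congruence|intros [_ [H _]]; lia].
      * cbn [run_end hd length xorb]. rewrite ballot_down by lia.
        split; intros (_ & H1 & H2); (split; [discriminate|split; [lia|exact H2]]).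
Qed.

Lemma first_ret_aux_last (e : list bool) (h : nat) : 1 <= h \/ hd false e = true ->
  first_ret_aux (Z.of_nat h) e = true -> last e true = false.
Proof.
  revert h; induction e as [|x r IH]; intros h Hpre H; [discriminate|].
  destruct x.
  - rewrite first_ret_aux_up in H. destruct r as [|y r]; [discriminate|].
    apply (IH (S h)); [left; lia|exact H].
  - destruct Hpre as [Hh|Hh]; [|discriminate].
    destruct (Nat.eq_dec h 1) as [->|Hne].
    + cbn in H. destruct r; [reflexivity|discriminate].
    + rewrite first_ret_aux_down in H by lia. destruct r as [|y r]; [discriminate|].
      apply (IH (h - 1)); [left; lia|exact H].
Qed.

(** * The Lalanne-Kreweras involution *)

Definition dominated (x y : list bool) : Prop :=
  forall s, ntrue (firstn s x) <= ntrue (firstn s y).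

Definition excursion_code (x y : list bool) : Prop :=
  length x = length y /\ ntrue x = ntrue y /\ dominated x y.

Definition code_path (x y : list bool) : list bool :=
  rebuild (2 * length x + 4) true (false :: x ++ [true]) (y ++ [false; true]).

Definition up_code (e : list bool) : list bool := removelast (tl (run_flags true e)).

Definition down_code (e : list bool) : list bool := removelast (removelast (run_flags false e)).

Lemma firstn_app_le {A : Type} (n : nat) (l m : list A) :
  n <= length l -> firstn n (l ++ m) = firstn n l.
Proof.
  intros Hn. rewrite firstn_app. replace (n - length l) with 0 by lia. apply app_nil_r.
Qed.

Lemma ballot_code (x y : list bool) : length x = length y ->
  ballot 0 true (false :: x ++ [true]) (y ++ [false; true]) <-> dominated x y.
Proof.
  intros Hxy. split.
  - intros H s.
    assert (Hmin : forall s, s <= length x -> ntrue (firstn s x) <= ntrue (firstn s y)).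
    { intros s' Hs. specialize (H (S s')).
      rewrite length_app, Nat.sub_0_r in H. cbn [length firstn] in H. rewrite ntrue_cons in H.
      replace (S s' - 1) with s' in H by lia.
      rewrite !firstn_app_le in H by lia. simpl in H. lia. }
    destruct (Nat.le_gt_cases s (length x)) as [Hs|Hs]; [exact (Hmin s Hs)|].
    rewrite !firstn_all2 by lia. rewrite <- (firstn_all x), <- (firstn_all y), <- Hxy.
    apply Hmin. lia.
  - intros H [|t] Ht _; [lia|]. rewrite length_app in Ht. cbn [length] in Ht.
    rewrite Nat.sub_0_r. replace (S t - 1) with t by lia. cbn [firstn]. rewrite ntrue_cons.
    rewrite !firstn_app_le by lia. specialize (H t). simpl. lia.
Qed.

Lemma dominated_swap_negb (x y : list bool) : length x = length y ->
  dominated x y -> dominated (map negb y) (map negb x).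
Proof.
  intros Hxy H s. rewrite !firstn_map, !ntrue_map_negb, !length_firstn, Hxy.
  specialize (H s). lia.
Qed.

Lemma excursion_code_swap_negb (x y : list bool) :
  excursion_code x y -> excursion_code (map negb y) (map negb x).
Proof.
  intros (Hl & Hn & Hd). split; [now rewrite !length_map|split].
  - rewrite !ntrue_map_negb. lia.
  - now apply dominated_swap_negb.
Qed.

Lemma ballot_flags_shape (U D : list bool) :
  last U true = true -> last D true = true -> length U = length D -> 2 <= length U ->
  ntrue U = ntrue D -> ballot 0 true U D ->
  U = false :: removelast (tl U) ++ [true] /\ D = removelast (removelast D) ++ [false; true].
Proof.
  intros HU HD Hlen H2 Hn Hb.
  destruct U as [|f U']; [simpl in H2; lia|].
  assert (Hf : f = false).
  { specialize (Hb 1 ltac:(lia) (Nat.le_0_l 1)). destruct f; [|reflexivity].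
    simpl in Hb. lia. }
  subst f. destruct U' as [|u0 U'']; [simpl in H2; lia|].
  destruct (exists_last (l := u0 :: U'') ltac:(discriminate)) as [x [u Ex]]. rewrite Ex in *.
  change (last ((false :: x) ++ [u]) true = true) in HU. rewrite last_last in HU. subst u.
  destruct D as [|d0 D']; [simpl in Hlen; lia|].
  destruct (exists_last (l := d0 :: D') ltac:(discriminate)) as [hb [d Ed]]. rewrite Ed in *.
  rewrite last_last in HD. subst d.
  destruct hb as [|h0 hb']; [rewrite length_app in Hlen; simpl in Hlen, H2; lia|].
  destruct (exists_last (l := h0 :: hb') ltac:(discriminate)) as [y [z Ez]]. rewrite Ez in *.
  cbn [length] in Hlen. rewrite !length_app in Hlen. cbn [length] in Hlen.
  assert (Hz : z = false).
  { specialize (Hb (S (length x)) ltac:(rewrite !length_app; simpl; lia) (Nat.le_0_l _)).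
    rewrite Nat.sub_0_r in Hb. replace (S (length x) - 1) with (length y) in Hb by lia.
    cbn [firstn] in Hb. rewrite firstn_app_le, firstn_all in Hb by lia.
    rewrite <- app_assoc, firstn_app_le, firstn_all in Hb by lia.
    rewrite ntrue_cons, count_occ_app, ntrue_cons in Hn.
    rewrite <- app_assoc, !count_occ_app, ntrue_cons in Hn.
    destruct z; simpl in *; lia. }
  subst z. cbn [tl]. rewrite !removelast_last. split; [reflexivity|]. now rewrite <- app_assoc.
Qed.

Lemma positive_excursion_code (e : list bool) :
  excursion e = true -> hd false e = true -> length e <> 2 ->
  excursion_code (up_code e) (down_code e) /\
  run_flags true e = false :: up_code e ++ [true] /\
  run_flags false e = down_code e ++ [false; true].
Proof.
  intros Hex Hhd H2. unfold excursion in Hex. change 0%Z with (Z.of_nat 0) in Hex.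
  pose proof (first_ret_aux_last e 0 (or_intror Hhd) Hex) as Hlast.
  apply first_ret_aux_iff_ballot in Hex as (Hne & Hlen & Hb); [|now right].
  rewrite Hhd in Hb. destruct e as [|x r]; [congruence|]. simpl in Hhd. subst x.
  assert (Hn : ntrue (run_flags true (true :: r)) = ntrue (run_flags false (true :: r))).
  { pose proof (ntrue_run_flags_balance true r) as Hbal. rewrite Hlast in Hbal. lia. }
  pose proof (length_run_flags (true :: r)) as Htot.
  set (U := run_flags true (true :: r)) in *. set (D := run_flags false (true :: r)) in *.
  assert (HU2 : 2 <= length U).
  { cbn [length] in *. destruct U as [|? [|]]; simpl in *; lia. }
  destruct (ballot_flags_shape U D (last_run_flags _ _) (last_run_flags _ _) ltac:(lia) HU2 Hn Hb)
    as [EU ED].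
  change (removelast (tl U)) with (up_code (true :: r)) in EU.
  change (removelast (removelast D)) with (down_code (true :: r)) in ED.
  split; [|split; assumption].
  set (x := up_code (true :: r)) in *. set (y := down_code (true :: r)) in *. clearbody x y.
  rewrite EU, ED in Hb, Hlen, Hn. cbn [length] in Hlen. rewrite !length_app in Hlen.
  rewrite ntrue_cons, !count_occ_app in Hn. cbn in Hlen, Hn.
  split; [lia|split; [lia|]]. apply ballot_code; [lia|exact Hb].
Qed.

Lemma code_path_spec (x y : list bool) : excursion_code x y ->
  excursion (code_path x y) = true /\ hd false (code_path x y) = true /\
  length (code_path x y) = 2 * length x + 4 /\
  run_flags true (code_path x y) = false :: x ++ [true] /\
  run_flags false (code_path x y) = y ++ [false; true].
Proof.
  intros (Hl & Hn & Hd).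
  assert (Hok : flags_ok true (false :: x ++ [true]) (y ++ [false; true])).
  { split; [|split].
    - change (last ((false :: x) ++ [true]) true = true). apply last_last.
    - change [false; true] with ([false] ++ [true]). rewrite app_assoc. apply last_last.
    - rewrite ntrue_cons, !count_occ_app, Hn. reflexivity. }
  assert (Hfuel : length (false :: x ++ [true]) + length (y ++ [false; true]) <= 2 * length x + 4)
    by (cbn [length]; rewrite !length_app; simpl; lia).
  destruct (run_flags_rebuild _ _ _ _ Hok Hfuel) as [HU HD].
  pose proof (length_rebuild _ _ _ _ Hok Hfuel) as HL.
  fold (code_path x y) in HU, HD, HL.
  assert (Hhd : hd false (code_path x y) = true).
  { unfold code_path. replace (2 * length x + 4) with (S (2 * length x + 3)) by lia. reflexivity. }
  cbn [length] in HL. rewrite !length_app in HL. cbn [length] in HL.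
  split; [|split; [exact Hhd|split; [lia|split; assumption]]].
  unfold excursion. change 0%Z with (Z.of_nat 0).
  apply first_ret_aux_iff_ballot; [now right|]. rewrite Hhd, HU, HD.
  split; [intros E; rewrite E in HL; simpl in HL; lia|].
  split; [cbn [length]; rewrite !length_app; simpl; lia|].
  now apply ballot_code.
Qed.

Lemma code_path_up_down_code (e : list bool) :
  excursion e = true -> hd false e = true -> length e <> 2 ->
  code_path (up_code e) (down_code e) = e.
Proof.
  intros Hex Hhd H2. destruct (positive_excursion_code e Hex Hhd H2) as ((Hxy & _) & EU & ED).
  pose proof (length_run_flags e) as Htot. rewrite EU, ED in Htot.
  cbn [length] in Htot. rewrite !length_app in Htot. cbn [length] in Htot.
  destruct e as [|x r]; [discriminate|]. simpl in Hhd. subst x.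
  unfold code_path. rewrite <- EU, <- ED. apply rebuild_run_flags. lia.
Qed.

Lemma up_down_code_code_path (x y : list bool) : excursion_code x y ->
  up_code (code_path x y) = x /\ down_code (code_path x y) = y.
Proof.
  intros Hc. destruct (code_path_spec x y Hc) as (_ & _ & _ & EU & ED).
  unfold up_code, down_code. rewrite EU, ED. cbn [tl].
  rewrite removelast_last. change [false; true] with ([false] ++ [true]).
  now rewrite app_assoc, !removelast_last.
Qed.

Lemma runs_code_path (x y : list bool) : excursion_code x y ->
  runs (code_path x y) = ntrue x + ntrue y + 2.
Proof.
  intros Hc. destruct (code_path_spec x y Hc) as (_ & _ & _ & EU & ED).
  rewrite runs_run_flags, EU, ED, ntrue_cons, !count_occ_app. simpl. lia.
Qed.

Lemma longruns_code_path (x y : list bool) : excursion_code x y ->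
  longruns (code_path x y) = ascents (map negb x) + ascents y + 2.
Proof.
  intros Hc. destruct (code_path_spec x y Hc) as (_ & _ & _ & EU & ED).
  rewrite longruns_run_flags, EU, ED, ascents_app_false_true.
  pose proof (ascents_cons_app_true false x) as Hx. rewrite Nat.add_0_r in Hx.
  rewrite Hx. cbn [map negb ascents andb]. lia.
Qed.

Definition lalanne_kreweras (e : list bool) : list bool :=
  code_path (map negb (down_code e)) (map negb (up_code e)).

Lemma lalanne_kreweras_code_path (x y : list bool) : excursion_code x y ->
  lalanne_kreweras (code_path x y) = code_path (map negb y) (map negb x).
Proof.
  intros Hc. unfold lalanne_kreweras. now destruct (up_down_code_code_path x y Hc) as [-> ->].
Qed.

Lemma lalanne_kreweras_spec (e : list bool) :
  excursion e = true -> hd false e = true -> length e <> 2 ->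
  let e' := lalanne_kreweras e in
  excursion e' = true /\ hd false e' = true /\ length e' = length e /\
  runs e' = length e - runs e /\ longruns e' = longruns e /\ lalanne_kreweras e' = e.
Proof.
  intros Hex Hhd H2. destruct (positive_excursion_code e Hex Hhd H2) as (Hc & _ & _).
  rewrite <- (code_path_up_down_code e Hex Hhd H2).
  set (x := up_code e) in *. set (y := down_code e) in *. clearbody x y.
  pose proof (excursion_code_swap_negb x y Hc) as Hc'.
  cbv zeta. rewrite (lalanne_kreweras_code_path x y Hc).
  destruct (code_path_spec x y Hc) as (_ & _ & Hl & _).
  destruct (code_path_spec _ _ Hc') as (Hex' & Hhd' & Hl' & _).
  rewrite (lalanne_kreweras_code_path _ _ Hc'), !map_negb_involutive.
  rewrite !runs_code_path, !longruns_code_path, Hl, Hl', map_negb_involutive, !ntrue_map_negb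
    by assumption.
  destruct Hc as (Hxy & Hn & _). rewrite length_map.
  pose proof (count_occ_bound bool_dec true x).
  repeat split; try assumption; lia.
Qed.

Lemma first_ret_aux_map_negb (e : list bool) (x : Z) :
  first_ret_aux (- x) (map negb e) = first_ret_aux x e.
Proof.
  revert x; induction e as [|b r IH]; intros x; [reflexivity|].
  cbn [map first_ret_aux].
  replace (- x + (if negb b then 1 else -1))%Z with (- (x + (if b then 1 else -1)))%Z
    by (destruct b; simpl; lia).
  destruct (Z.eqb_spec (x + (if b then 1 else -1)) 0) as [E|E].
  - rewrite E. now destruct r.
  - replace (- (x + (if b then 1 else -1)) =? 0)%Z with false by (symmetry; apply Z.eqb_neq; lia).
    apply IH.
Qed.

Lemma excursion_map_negb (e : list bool) : excursion (map negb e) = excursion e.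
Proof. exact (first_ret_aux_map_negb e 0). Qed.

Lemma rl_aux_map_negb (cur : bool) (len : nat) (r : list bool) :
  rl_aux (negb cur) len (map negb r) = rl_aux cur len r.
Proof.
  revert cur len; induction r as [|y r IH]; intros cur len; [reflexivity|].
  cbn [map rl_aux]. rewrite !IH. now destruct y, cur.
Qed.

Lemma run_lengths_map_negb (e : list bool) : run_lengths (map negb e) = run_lengths e.
Proof. destruct e as [|x r]; [reflexivity|]. apply rl_aux_map_negb. Qed.

Definition orient (b : bool) (e : list bool) : list bool := if b then e else map negb e.

Lemma orient_involutive (b : bool) (e : list bool) : orient b (orient b e) = e.
Proof. destruct b; [reflexivity|apply map_negb_involutive]. Qed.

Lemma orient_stats (b : bool) (e : list bool) :
  excursion (orient b e) = excursion e /\ length (orient b e) = length e /\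
  runs (orient b e) = runs e /\ longruns (orient b e) = longruns e.
Proof.
  destruct b; [repeat split|]. unfold orient, runs, longruns.
  rewrite excursion_map_negb, length_map, run_lengths_map_negb. repeat split.
Qed.

Lemma hd_orient_hd (e : list bool) : e <> [] -> hd false (orient (hd true e) e) = true.
Proof. destruct e as [|[] r]; easy. Qed.

(* The identity off the excursions of length <> 2, so that [dual] permutes
   every [bools m]. *)
Definition dual (e : list bool) : list bool :=
  if excursion e && negb (length e =? 2) then
    orient (hd true e) (lalanne_kreweras (orient (hd true e) e))
  else e.

Lemma dual_spec (e : list bool) : excursion e = true -> length e <> 2 ->
  excursion (dual e) = true /\ length (dual e) = length e /\ hd true (dual e) = hd true e /\
  runs (dual e) = length e - runs e /\ longruns (dual e) = longruns e /\
  orient (hd true e) (dual e) = lalanne_kreweras (orient (hd true e) e).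
Proof.
  intros Hex H2. unfold dual. rewrite Hex. apply Nat.eqb_neq in H2 as H2'. rewrite H2'.
  cbn [andb negb]. set (b := hd true e). set (p := orient b e).
  destruct (orient_stats b e) as (Ep & Lp & Rp & Up). fold p in Ep, Lp, Rp, Up.
  assert (Hhd : hd false p = true) by (apply hd_orient_hd; now intros ->).
  destruct (lalanne_kreweras_spec p) as (Eq & Hq & Lq & Rq & Uq & _);
    [congruence|exact Hhd|congruence|].
  destruct (orient_stats b (lalanne_kreweras p)) as (Eo & Lo & Ro & Uo).
  rewrite orient_involutive. repeat split; try congruence.
  destruct (lalanne_kreweras p) as [|y q]; [discriminate|]. simpl in Hq. subst y.
  now destruct b.
Qed.

Lemma dual_trivial (e : list bool) : excursion e && negb (length e =? 2) = false -> dual e = e.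
Proof. intros E. unfold dual. now rewrite E. Qed.

Lemma length_dual (e : list bool) : length (dual e) = length e.
Proof.
  destruct (excursion e && negb (length e =? 2)) eqn:E; [|now rewrite dual_trivial].
  apply andb_prop in E as [Hex H2]. apply negb_true_iff, Nat.eqb_neq in H2.
  apply (dual_spec e Hex H2).
Qed.

Lemma dual_involutive (e : list bool) : dual (dual e) = e.
Proof.
  destruct (excursion e && negb (length e =? 2)) eqn:E; [|now rewrite !(dual_trivial e E)].
  apply andb_prop in E as [Hex H2]. apply negb_true_iff, Nat.eqb_neq in H2.
  destruct (dual_spec e Hex H2) as (Ed & Ld & Hd & _ & _ & Od).
  assert (H2d : length (dual e) <> 2) by now rewrite Ld.
  destruct (dual_spec (dual e) Ed H2d) as (_ & _ & _ & _ & _ & Odd).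
  rewrite Hd, Od in Odd. set (b := hd true e) in *.
  destruct (orient_stats b e) as (Ep & Lp & _ & _).
  destruct (lalanne_kreweras_spec (orient b e)) as (_ & _ & _ & _ & _ & Inv);
    [congruence|apply hd_orient_hd; now intros ->|congruence|].
  rewrite Inv in Odd. rewrite <- (orient_involutive b (dual (dual e))), Odd.
  apply orient_involutive.
Qed.

Lemma In_bools (m : nat) (e : list bool) : In e (bools m) <-> length e = m.
Proof.
  revert e; induction m as [|m IH]; intros e.
  - split; [now intros [<-|[]]|]. destruct e; [now left|discriminate].
  - cbn [bools]. rewrite in_app_iff, !in_map_iff. split.
    + intros [[x [<- Hx]]|[x [<- Hx]]]; apply IH in Hx; simpl; lia.
    + destruct e as [|b e]; [discriminate|]. intros [= H].
      destruct b; [left|right]; exists e; split; auto; now apply IH.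
Qed.

Lemma NoDup_bools (m : nat) : NoDup (bools m).
Proof.
  induction m as [|m IH]; [repeat constructor; easy|]. cbn [bools].
  apply NoDup_app; try (apply FinFun.Injective_map_NoDup; [intros x y [= ?]; assumption|exact IH]).
  intros x Hx Hy. apply in_map_iff in Hx as [a [<- _]]. apply in_map_iff in Hy as [b [? _]].
  discriminate.
Qed.

Lemma Permutation_bools_involution (sigma : list bool -> list bool) (m : nat) :
  (forall e, sigma (sigma e) = e) -> (forall e, length (sigma e) = length e) ->
  Permutation (bools m) (map sigma (bools m)).
Proof.
  intros Hinv Hlen. apply NoDup_Permutation.
  - apply NoDup_bools.
  - apply FinFun.Injective_map_NoDup; [|apply NoDup_bools].
    intros x y E. now rewrite <- (Hinv x), E, Hinv.
  - intros e. rewrite in_map_iff, In_bools. split.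
    + intros He. exists (sigma e). now rewrite Hinv, In_bools, Hlen.
    + intros [x [<- Hx]]. rewrite In_bools in Hx. now rewrite Hlen.
Qed.

Section FoldPermutation.

Context {A : Type} (op : A -> A -> A) (z : A).
Hypothesis op_assoc : forall x y w, op x (op y w) = op (op x y) w.
Hypothesis op_comm : forall x y, op x y = op y x.

Lemma fold_right_Permutation (l1 l2 : list A) :
  Permutation l1 l2 -> fold_right op z l1 = fold_right op z l2.
Proof.
  induction 1 as [| x l1 l2 _ IH | x y l | l1 l2 l3 _ IH1 _ IH2]; cbn [fold_right].
  - reflexivity.
  - now rewrite IH.
  - now rewrite !op_assoc, (op_comm y x).
  - congruence.
Qed.

Lemma fold_right_bools_involution (sigma : list bool -> list bool) (m : nat) (g : list bool -> A) :
  (forall e, sigma (sigma e) = e) -> (forall e, length (sigma e) = length e) ->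
  fold_right op z (map g (bools m)) = fold_right op z (map (fun e => g (sigma e)) (bools m)).
Proof.
  intros Hinv Hlen. rewrite <- (map_map sigma g).
  apply fold_right_Permutation, Permutation_map, Permutation_bools_involution; assumption.
Qed.

End FoldPermutation.

Open Scope R_scope.

Lemma wt_aux_runs (a : R) (x : bool) (r : list bool) :
  wt_aux a x r * (1 - a) = a ^ (length (x :: r) - runs (x :: r)) * (1 - a) ^ runs (x :: r).
Proof.
  revert x; induction r as [|y r IH]; intros x; [simpl; ring|].
  cbn [wt_aux]. rewrite Rmult_assoc, IH, runs_cons_cons.
  pose proof (runs_le_length (y :: r)) as Hle.
  change (length (x :: y :: r)) with (S (length (y :: r))).
  set (L := length (y :: r)) in *. set (k := runs (y :: r)) in *.
  replace (Bool.eqb y x) with (Bool.eqb x y) by now destruct x, y.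
  destruct (Bool.eqb x y).
  - replace (S L - (0 + k))%nat with (S (L - k)) by lia. simpl. ring.
  - replace (S L - (1 + k))%nat with (L - k)%nat by lia. simpl. ring.
Qed.

Lemma weight_runs (a : R) (e : list bool) : e <> [] ->
  (1 - a) * weight a e = / 2 * a ^ (length e - runs e) * (1 - a) ^ runs e.
Proof.
  intros Hne. destruct e as [|x r]; [congruence|]. unfold weight.
  rewrite Rmult_assoc, <- wt_aux_runs. ring.
Qed.

Lemma excursion_nonnil (e : list bool) : excursion e = true -> e <> [].
Proof. now intros H ->. Qed.

Lemma weight_dual (a : R) (e : list bool) : excursion e = true -> length e <> 2%nat ->
  (1 - a) * weight a (dual e) = a * weight (1 - a) e.
Proof.
  intros Hex H2. destruct (dual_spec e Hex H2) as (Ed & Ld & _ & Rd & _ & _).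
  pose proof (weight_runs (1 - a) e (excursion_nonnil e Hex)) as W.
  replace (1 - (1 - a)) with a in W by ring.
  rewrite weight_runs, Ld, Rd, W by (apply excursion_nonnil, Ed).
  pose proof (runs_le_length e).
  replace (length e - (length e - runs e))%nat with (runs e) by lia. ring.
Qed.

Lemma Rmult_fold_right_Rplus (c : R) (l : list R) :
  c * fold_right Rplus 0 l = fold_right Rplus 0 (map (Rmult c) l).
Proof. induction l as [|x l IH]; simpl; [ring|rewrite <- IH; ring]. Qed.

Lemma excursion_runs_duality (a : R) (n k l : nat) : (2 <= n)%nat ->
  (1 - a) * Pfin a (2 * n)
     (fun e => excursion e && Nat.eqb (runs e) (2 * k) && Nat.eqb (longruns e) l)
  = a * Pfin (1 - a) (2 * n)
     (fun e => excursion e && Nat.eqb (length e - runs e) (2 * k) && Nat.eqb (longruns e) l).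
Proof.
  intros Hn. unfold Pfin. rewrite !Rmult_fold_right_Rplus, !map_map.
  rewrite (fold_right_bools_involution Rplus 0 (fun x y w => eq_sym (Rplus_assoc x y w))
             Rplus_comm dual) by (apply dual_involutive || apply length_dual).
  f_equal. apply map_ext_in. intros e He. apply In_bools in He.
  destruct (excursion e) eqn:Hex.
  - assert (H2 : length e <> 2%nat) by lia.
    destruct (dual_spec e Hex H2) as (Ed & Ld & _ & Rd & Ud & _).
    rewrite Ed, Rd, Ud. cbn [andb].
    destruct (Nat.eqb (length e - runs e) (2 * k) && Nat.eqb (longruns e) l).
    + now apply weight_dual.
    + ring.
  - rewrite dual_trivial, Hex by now rewrite Hex. cbn [andb]. ring.
Qed.

Lemma weight_half (e : list bool) : weight (/ 2) e = (/ 2) ^ length e.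
Proof.
  destruct e as [|x r]; [reflexivity|]. unfold weight. cbn [length pow]. f_equal.
  revert x; induction r as [|y r IH]; intros x; [reflexivity|].
  cbn [wt_aux length pow]. rewrite IH. destruct (Bool.eqb y x); [reflexivity|]. field.
Qed.

Lemma Eterm_dual (f g : list bool -> C) (m : nat) : m <> 2%nat ->
  (forall e, excursion e = true -> length e = m -> f (dual e) = g e) ->
  Eterm (/ 2) f m = Eterm (/ 2) g m.
Proof.
  intros Hm Hfg. unfold Eterm.
  rewrite (fold_right_bools_involution Cplus (RtoC 0) Cplus_assoc Cplus_comm dual)
    by (apply dual_involutive || apply length_dual).
  f_equal. apply map_ext_in. intros e He. apply In_bools in He.
  destruct (excursion e) eqn:Hex.
  - assert (H2 : length e <> 2%nat) by lia.
    destruct (dual_spec e Hex H2) as (Ed & Ld & _).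
    rewrite Ed, !weight_half, Ld, Hfg by assumption. reflexivity.
  - now rewrite dual_trivial, Hex by now rewrite Hex.
Qed.

Lemma Eterm_2 (f : list bool -> C) :
  Eterm (/ 2) f 2 = Cmult (RtoC (/ 4)) (Cplus (f [true; false]) (f [false; true])).
Proof.
  unfold Eterm. cbn. replace (/ 2 * ((1 - / 2) * 1)) with (/ 4) by field. ring.
Qed.

Lemma fold_right_Rplus_app (l1 l2 : list R) :
  fold_right Rplus 0 (l1 ++ l2) = fold_right Rplus 0 l1 + fold_right Rplus 0 l2.
Proof. induction l1 as [|x l1 IH]; simpl; [ring|rewrite IH; ring]. Qed.

Lemma sum_bools_S (m : nat) (g : list bool -> R) :
  fold_right Rplus 0 (map g (bools (S m)))
  = fold_right Rplus 0 (map (fun e => g (true :: e)) (bools m))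
    + fold_right Rplus 0 (map (fun e => g (false :: e)) (bools m)).
Proof. cbn [bools]. now rewrite map_app, fold_right_Rplus_app, !map_map. Qed.

(* Probability that the symmetric walk started at [x] first hits 0 at time
   [m >= 1]; [hit_prob] also counts time 0 as a hit when [y = 0]. *)
Definition first_hit_prob (m : nat) (x : Z) : R :=
  fold_right Rplus 0 (map (fun e => if first_ret_aux x e then (/ 2) ^ m else 0) (bools m)).

Definition hit_prob (m : nat) (y : Z) : R :=
  if (y =? 0)%Z then (if Nat.eqb m 0 then 1 else 0) else first_hit_prob m y.

Lemma fold_right_Rplus_zero {A : Type} (l : list A) (g : A -> R) :
  (forall e, In e l -> g e = 0) -> fold_right Rplus 0 (map g l) = 0.
Proof.
  induction l as [|e l IH]; intros H; cbn [map fold_right]; [reflexivity|].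
  rewrite IH by (intros; apply H; simpl; auto). rewrite H by (left; reflexivity). ring.
Qed.

Lemma first_hit_prob_first_step (m : nat) (x : Z) (b : bool) :
  fold_right Rplus 0
    (map (fun e => if first_ret_aux x (b :: e) then (/ 2) ^ S m else 0) (bools m))
  = / 2 * hit_prob m (x + if b then 1 else -1).
Proof.
  unfold hit_prob. cbn [first_ret_aux]. destruct (x + (if b then 1 else -1) =? 0)%Z.
  - destruct m as [|m]; cbn [Nat.eqb].
    + cbn. ring.
    + rewrite Rmult_0_r. apply fold_right_Rplus_zero.
      intros e He. apply In_bools in He. now destruct e.
  - unfold first_hit_prob. rewrite Rmult_fold_right_Rplus, map_map. f_equal.
    apply map_ext. intros e. destruct (first_ret_aux _ e); cbn [pow]; ring.
Qed.

Lemma first_hit_prob_S (m : nat) (x : Z) :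
  first_hit_prob (S m) x = / 2 * (hit_prob m (x + 1) + hit_prob m (x - 1)).
Proof.
  unfold first_hit_prob at 1. rewrite sum_bools_S, !first_hit_prob_first_step.
  change (x + (if true then 1 else -1))%Z with (x + 1)%Z.
  replace (x + (if false then 1 else -1))%Z with (x - 1)%Z by lia. ring.
Qed.

Lemma fold_right_Rplus_nonneg {A : Type} (l : list A) (g : A -> R) :
  (forall e, 0 <= g e) -> 0 <= fold_right Rplus 0 (map g l).
Proof.
  intros H. induction l as [|e l IH]; cbn [map fold_right]; [lra|]. specialize (H e). lra.
Qed.

Lemma first_hit_prob_nonneg (m : nat) (x : Z) : 0 <= first_hit_prob m x.
Proof.
  apply fold_right_Rplus_nonneg. intros e.
  destruct (first_ret_aux x e); [apply pow_le; lra|lra].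
Qed.

Lemma sum_f_R0_indicator_0 (M : nat) : sum_f_R0 (fun i => if Nat.eqb i 0 then 1 else 0) M = 1.
Proof. induction M as [|M IH]; cbn [sum_f_R0 Nat.eqb]; [reflexivity|rewrite IH; ring]. Qed.

Lemma sum_first_hit_prob_bounds (M : nat) (x : Z) :
  0 <= sum_f_R0 (fun m => first_hit_prob m x) M <= 1.
Proof.
  revert x; induction M as [|M IH]; intros x.
  - cbn. lra.
  - rewrite decomp_sum by lia. cbn [pred].
    cbv beta. replace (first_hit_prob 0 x) with 0 by (unfold first_hit_prob; cbn; ring).
    rewrite (sum_eq _ (fun i => hit_prob i (x + 1) * / 2 + hit_prob i (x - 1) * / 2))
      by (intros i _; rewrite first_hit_prob_S; ring).
    rewrite sum_plus, <- !scal_sum.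
    assert (Hhit : forall y, 0 <= sum_f_R0 (fun i => hit_prob i y) M <= 1).
    { intros y. unfold hit_prob.
      destruct (y =? 0)%Z; [rewrite sum_f_R0_indicator_0; lra|apply IH]. }
    pose proof (Hhit (x + 1)%Z). pose proof (Hhit (x - 1)%Z). lra.
Qed.

Lemma ex_series_first_hit_prob (x : Z) : ex_series (fun m => first_hit_prob m x).
Proof.
  set (p := fun m => first_hit_prob m x).
  assert (Hg : Un_growing (sum_f_R0 p)).
  { intros n. cbn [sum_f_R0]. pose proof (first_hit_prob_nonneg (S n) x). unfold p. lra. }
  assert (Hb : has_ub (sum_f_R0 p)).
  { exists 1. intros y [i ->]. apply sum_first_hit_prob_bounds. }
  destruct (growing_cv _ Hg Hb) as [l Hl].
  exists l. now apply is_series_Reals.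
Qed.

Lemma Cmod_fold_right_Cplus_le {A : Type} (l : list A) (g : A -> C) (h : A -> R) :
  (forall e, In e l -> Cmod (g e) <= h e) ->
  Cmod (fold_right Cplus (RtoC 0) (map g l)) <= fold_right Rplus 0 (map h l).
Proof.
  induction l as [|e l IH]; intros H; cbn [map fold_right].
  - rewrite Cmod_0. lra.
  - eapply Rle_trans; [apply Cmod_triangle|].
    apply Rplus_le_compat; [apply H; now left|apply IH; intros; apply H; now right].
Qed.

Lemma Cmod_Eterm_le (f : list bool -> C) (m : nat) :
  (forall e, Cmod (f e) <= 1) -> Cmod (Eterm (/ 2) f m) <= first_hit_prob m 0.
Proof.
  intros Hf. apply Cmod_fold_right_Cplus_le. intros e He. apply In_bools in He.
  unfold excursion. destruct (first_ret_aux 0 e).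
  - rewrite Cmod_mult, Cmod_R, weight_half, He, Rabs_pos_eq by (apply pow_le; lra).
    specialize (Hf e). pose proof (pow_le (/ 2) m ltac:(lra)). nra.
  - rewrite Cmod_0. lra.
Qed.

Lemma ex_series_Eterm (f : list bool -> C) :
  (forall e, Cmod (f e) <= 1) -> ex_series (Eterm (/ 2) f).
Proof.
  intros Hf. apply (@ex_series_le C_AbsRing C_CompleteNormedModule _ (fun m => first_hit_prob m 0)).
  - intros m. now apply Cmod_Eterm_le.
  - apply ex_series_first_hit_prob.
Qed.

Lemma is_series_C_update (a b : nat -> C) (i : nat) (l : C) :
  (forall m, m <> i -> a m = b m) -> is_series a l -> is_series b (l - a i + b i)%C.
Proof.
  intros Hab Ha. apply (is_series_decr_n b (S i)); [lia|].
  apply (is_series_ext (fun k => a (S i + k)%nat)); [intros k; apply Hab; lia|].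
  apply is_series_incr_n; [lia|]. cbn [pred].
  assert (Hsum : @eq C (sum_n b i) (sum_n a i - a i + b i)%C).
  { destruct i as [|j].
    - rewrite !sum_O. ring.
    - rewrite !sum_Sn, (sum_n_ext_loc b a) by (intros m Hm; symmetry; apply Hab; lia).
      change (@eq C (Cplus (sum_n a j) (b (S j)))
                    (Cplus (sum_n a j) (a (S j)) - a (S j) + b (S j))%C).
      ring. }
  change (is_series a (Cplus (Cplus (l - a i + b i)%C (Copp (sum_n b i))) (sum_n a i))).
  rewrite Hsum.
  replace (Cplus (Cplus (l - a i + b i)%C (Copp (sum_n a i - a i + b i)%C)) (sum_n a i))
    with l by ring.
  exact Ha.
Qed.

Lemma Cmod_expi (x : R) : Cmod (expi x) = 1.
Proof.
  unfold Cmod, expi. cbn [fst snd]. rewrite <- sqrt_1. f_equal.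
  pose proof (sin2_cos2 x) as H. unfold Rsqr in H. simpl. lra.
Qed.

Lemma expi_0 : expi 0 = RtoC 1.
Proof. unfold expi. now rewrite cos_0, sin_0. Qed.

Lemma Eterm_2_difference (r s t : R) :
  Cminus
    (Eterm (/ 2) (fun e =>
       Cmult (Cmult (expi (r * INR (runs e))) (expi (s * INR (longruns e))))
             (expi (t * INR (length e)))) 2)
    (Eterm (/ 2) (fun e =>
       Cmult (Cmult (expi (r * (INR (length e) - INR (runs e)))) (expi (s * INR (longruns e))))
             (expi (t * INR (length e)))) 2)
  = Cmult (RtoC (/ 2)) (Cmult (expi (2 * t)) (Cminus (expi (2 * r)) (RtoC 1))).
Proof.
  rewrite !Eterm_2. cbn [runs longruns run_lengths rl_aux Bool.eqb length filter Nat.leb].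
  replace (INR 2) with 2 by reflexivity. replace (INR 0) with 0 by reflexivity.
  rewrite Rminus_diag, !Rmult_0_r, expi_0, !(Rmult_comm _ 2).
  replace (RtoC (/ 4)) with (Cmult (RtoC (/ 2)) (RtoC (/ 2)))
    by (unfold RtoC, Cmult; cbn; f_equal; field).
  replace (RtoC (/ 2)) with (Cinv (RtoC 2)) by (unfold Cinv, RtoC; cbn; f_equal; field).
  field.
Qed.

Lemma Eterm_series_difference (f g : list bool -> C) :
  (forall e, Cmod (f e) <= 1) ->
  (forall e, excursion e = true -> length e <> 2%nat -> f (dual e) = g e) ->
  exists S1 S2 : C, is_series (Eterm (/ 2) f) S1 /\ is_series (Eterm (/ 2) g) S2 /\
    Cminus S1 S2 = Cminus (Eterm (/ 2) f 2) (Eterm (/ 2) g 2).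
Proof.
  intros Hf Hfg. destruct (ex_series_Eterm f Hf) as [S1 H1].
  exists S1, (S1 - Eterm (/ 2) f 2 + Eterm (/ 2) g 2)%C. split; [exact H1|split].
  - apply is_series_C_update; [|exact H1].
    intros m Hm. apply Eterm_dual; [exact Hm|]. intros e Hex Hl. apply Hfg; congruence.
  - unfold Cminus. ring.
Qed.

Lemma Cmod_expi_prod (x y z : R) : Cmod (Cmult (Cmult (expi x) (expi y)) (expi z)) <= 1.
Proof. rewrite !Cmod_mult, !Cmod_expi. lra. Qed.

Theorem corollary2 :
  (forall (a : R), 0 < a < 1 ->
   forall n k l : nat, (2 <= n)%nat ->
     (1 - a) * Pfin a (2 * n)
        (fun e => excursion e && Nat.eqb (runs e) (2 * k)
                  && Nat.eqb (longruns e) l)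
     = a * Pfin (1 - a) (2 * n)
        (fun e => excursion e && Nat.eqb (length e - runs e) (2 * k)
                  && Nat.eqb (longruns e) l))
  /\
  (forall r s t : R,
   exists S1 S2 : C,
     is_series (Eterm (/ 2) (fun e =>
        Cmult (Cmult (expi (r * INR (runs e))) (expi (s * INR (longruns e))))
              (expi (t * INR (length e))))) S1
     /\ is_series (Eterm (/ 2) (fun e =>
        Cmult (Cmult (expi (r * (INR (length e) - INR (runs e))))
                     (expi (s * INR (longruns e))))
              (expi (t * INR (length e))))) S2
     /\ Cminus S1 S2
        = Cmult (RtoC (/ 2)) (Cmult (expi (2 * t)) (Cminus (expi (2 * r)) (RtoC 1)))).
Proof.
  split.
  - intros a _ n k l Hn. exact (excursion_runs_duality a n k l Hn).
  - intros r s t. rewrite <- (Eterm_2_difference r s t).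
    apply Eterm_series_difference; [intros; apply Cmod_expi_prod|].
    intros e Hex H2. destruct (dual_spec e Hex H2) as (_ & Ld & _ & Rd & Ud & _).
    now rewrite Ld, Rd, Ud, minus_INR by apply runs_le_length.
Qed.
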